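(* With the notation below, let $D\in\mathrm{Div}(C_p)$ and let $f\in\mathcal K(C_p)$ be real-valued. (i) Put $D'=D+(f)$. For every integer $n\geq0$ with $\|f\|_p\leq p^n$, the map $\xi\mapsto\xi-f$ induces a bijection from $H^0(D)^{p^n}$ onto $H^0(D')^{p^n}$ (which is an isomorphism of $\mathbb{R}_{\max}$-modules). (ii) For every integer $n\geq0$, the map $F_{p^n}:\xi\mapsto p^n\xi$ is a bijection $H^0(D)^{p^n}\to H^0(p^nD)^1$ which is an isomorphism of $\mathbb{R}_{\max}$-modules twisted by the automorphism $x\mapsto p^nx$ of $\mathbb{R}_{\max}$ (i.e. it preserves $\vee$ and $F_{p^n}(\xi+a)=F_{p^n}(\xi)+p^na$), and it preserves the topological dimension.
   Context: Let $p$ be a prime, $H_p=\mathbb{Z}[1/p]$, $|\cdot|_p$ the $p$-adic absolute value with $|p|_p=1/p$. $\mathbb{R}_{\max}=\mathbb{R}\cup\{-\infty\}$ with operations $\max$ and $+$. $C_p$ is the set of subgroups $H=\lambda H_p\subset\mathbb{R}$, $\lambda>0$. $\mathcal K(C_p)$: continuous piecewise affine $f:(0,\infty)\to\mathbb{R}$ with slopes in $H_p$ and $f(p\lambda)=f(\lambda)$, plus the constant $-\infty$. For real-valued $f$ and $H=\lambda H_p$, $\mathrm{Ord}_H(f)=h_+-h_-$, $h_\pm=\lim_{\epsilon\to0\pm}(f((1+\epsilon)\lambda)-f(\lambda))/\epsilon$; $(f)(H)=\mathrm{Ord}_H(f)$. Divisors: maps $D$ with $D(H)\in H$, finitely supported,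 ordered pointwise, group $\mathrm{Div}(C_p)$. $H^0(D)=\{f\in\mathcal K(C_p)\text{ real-valued}\mid D+(f)\geq0\}\cup\{-\infty\}$, an $\mathbb{R}_{\max}$-module via max and addition of constants, topologized by $d(f,g)=\max_{x\in[1,p]}|f(x)-g(x)|$. $\|f\|_p=\max\{|h|_p/\lambda\}$ over $\lambda>0$ and $h$ the left/right slopes of $f$ at $\lambda$; $H^0(D)^\rho=\{f\in H^0(D)\mid\|f\|_p\leq\rho\}$ (containing $-\infty$). Topological dimension is the Lebesgue covering dimension. *)

From HB Require Import structures.
From mathcomp Require Import all_boot all_order all_algebra.
From mathcomp Require Import all_classical all_reals all_analysis.
Set Implicit Arguments. Unset Strict Implicit. Unset Printing Implicit Defensive.
Import Order.TTheory GRing.Theory Num.Theory.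
Import numFieldNormedType.Exports.
Local Open Scope classical_set_scope.
Local Open Scope ring_scope.

Section Defs.
Variable R : realType.

Definition posR := {x : R | 0 < x}.

(* a function on (0,+oo), viewed as a function on R (value 0 off (0,+oo));
   used only to speak of values, limits and affine pieces *)
Definition ext (f : posR -> R) (x : R) : R :=
  odflt 0 (omap f (insub x : option posR)).

Definition inHp (p : nat) (h : R) : Prop :=
  exists (m : int) (k : nat), h = m%:~R / (p%:R ^+ k).

(* p-adic absolute value on H_p: |m / p^k|_p = p^(k - v_p(m)), |0|_p = 0 *)
Definition pabs (p : nat) (h : R) : R :=
  xget 0 [set a | exists (m : int) (k : nat), m != 0 /\ h = m%:~R / (p%:R ^+ k)
                   /\ a = p%:R ^+ k / p%:R ^+ (logn p `|m|%N)].

Definition pw_affine (p : nat) (f : posR -> R) : Prop :=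
  (forall x : R, 0 < x -> {for x, continuous (ext f)}) /\
  forall a b : R, 0 < a -> a < b ->
    exists (k : nat) (t : nat -> R),
      [/\ t 0%N = a, t k = b, (forall i, (i < k)%N -> t i < t i.+1) &
        forall i, (i < k)%N -> exists s c : R, inHp p s /\
          forall y, t i <= y <= t i.+1 -> ext f y = s * y + c].

(* real-valued elements of K(C_p) *)
Definition inK (p : nat) (f : posR -> R) : Prop :=
  pw_affine p f /\ forall x : R, 0 < x -> ext f (p%:R * x) = ext f x.

Definition rslope (f : posR -> R) (x : R) : R :=
  lim ((fun t => (ext f (x + t) - ext f x) / t) @ 0^'+).
Definition lslope (f : posR -> R) (x : R) : R :=
  lim ((fun t => (ext f (x + t) - ext f x) / t) @ 0^'-).

(* Ord_H(f) for H = lam H_p, as a function of the representative lam *)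
Definition ordf (f : posR -> R) (lam : R) : R :=
  lim ((fun e => (ext f ((1 + e) * lam) - ext f lam) / e) @ 0^'+)
  - lim ((fun e => (ext f ((1 + e) * lam) - ext f lam) / e) @ 0^'-).

(* a divisor D : C_p -> R, encoded by lam |-> D(lam H_p) for lam > 0:
   well defined (invariant under lam |-> p lam), D(H) in H, finite support *)
Definition is_divisor (p : nat) (D : R -> R) : Prop :=
  [/\ (forall lam, 0 < lam -> D (p%:R * lam) = D lam),
      (forall lam, 0 < lam -> exists h, inHp p h /\ D lam = lam * h) &
      exists s : seq R, forall lam, 1 <= lam < p%:R -> D lam != 0 -> lam \in s].

Definition div_add_ord (D : R -> R) (f : posR -> R) : R -> R :=
  fun lam => D lam + ordf f lam.
Definition div_scale (c : R) (D : R -> R) : R -> R := fun lam => c * D lam.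

Definition pnorm_le (p : nat) (f : posR -> R) (rho : R) : Prop :=
  forall lam : R, 0 < lam ->
    pabs p (lslope f lam) / lam <= rho /\ pabs p (rslope f lam) / lam <= rho.

(* elements of K(C_p) together with -oo (= None) *)
Definition Kelt := option (posR -> R).
(* R_max = R u {-oo} (None = -oo) *)
Definition Rmax := option R.

Definition H0 (p : nat) (D : R -> R) : set Kelt :=
  fun xi => match xi with
            | None => True
            | Some g => inK p g /\ forall lam, 0 < lam -> 0 <= D lam + ordf g lam
            end.

Definition H0rho (p : nat) (D : R -> R) (rho : R) : set Kelt :=
  fun xi => H0 p D xi /\ match xi with None => True | Some g => pnorm_le p g rho end.

Definition kjoin (xi eta : Kelt) : Kelt :=
  match xi, eta with
  | Some g, Some h => Some (fun x => Num.max (g x) (h x))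
  | None, _ => eta
  | _, None => xi
  end.
Definition kact (a : Rmax) (xi : Kelt) : Kelt :=
  match a, xi with
  | Some a, Some g => Some (fun x => g x + a)
  | _, _ => None
  end.

(* the metric d(f,g) = max_{x in [1,p]} |f x - g x|; -oo is isolated *)
Definition dist (p : nat) (f g : posR -> R) : R :=
  sup [set `|ext f x - ext g x| | x in `[1, p%:R]%classic].
Definition close (p : nat) (xi eta : Kelt) (e : R) : Prop :=
  match xi, eta with
  | Some f, Some g => dist p f g < e
  | None, None => True
  | _, _ => False
  end.
Definition openIn (p : nat) (S U : set Kelt) : Prop :=
  U `<=` S /\ forall x, U x -> exists2 e : R, 0 < e &
    forall y, S y -> close p x y e -> U y.

Definition covdim_le (p : nat) (S : set Kelt) (n : nat) : Prop :=
  forall (m : nat) (U : nat -> set Kelt),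
    (forall i, (i < m)%N -> openIn p S (U i)) ->
    (forall x, S x -> exists2 i, (i < m)%N & U i x) ->
    exists (k : nat) (V : nat -> set Kelt),
      [/\ forall j, (j < k)%N -> openIn p S (V j),
          forall x, S x -> exists2 j, (j < k)%N & V j x,
          forall j, (j < k)%N -> exists2 i, (i < m)%N & V j `<=` U i &
          forall x, S x -> forall J : seq nat, uniq J ->
            (forall j, j \in J -> (j < k)%N /\ V j x) -> (size J <= n.+1)%N].

(* topological (covering) dimension, in \bar R (+oo if none) *)
Definition top_dim (p : nat) (S : set Kelt) : \bar R :=
  ereal_inf [set (n%:R)%:E | n in [set n | covdim_le p S n]].

End Defs.

From Pilot Require Import Defs.
From HB Require Import structures.
From mathcomp Require Import all_boot all_order all_algebra.
From mathcomp Require Import all_classical all_reals all_analysis.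
From mathcomp Require Import ring lra.
Import Order.TTheory GRing.Theory Num.Theory.
Import numFieldNormedType.Exports.
Local Open Scope classical_set_scope.
Local Open Scope ring_scope.
Set Implicit Arguments. Unset Strict Implicit.

(* Both maps act pointwise, so they commute with max and are compatible with
   adding constants; the content is in how slopes transform.  One-sided slopes,
   and hence Ord, are linear in the function.  Thus Ord(xi - f) = Ord xi - Ord f
   turns D + (xi) >= 0 into D + (f) + (xi - f) >= 0, and the ultrametric
   inequality |s - t|_p <= max(|s|_p, |t|_p) keeps ||xi - f||_p <= p^n; that
   xi - f is again piecewise affine needs a common refinement of the affine
   subdivisions of xi and f.  Multiplying by p^n multiplies slopes and Ord by
   p^n but divides their p-adic absolute values by p^n, which rescales the
   divisor and turns the norm bound p^n into 1.  Finally xi |-> p^n xi is a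
   dilation of the sup metric on [1, p] with inverse a dilation, hence a
   homeomorphism, and covering dimension is a topological invariant. *)

Lemma set_bij_inverse {aT rT : Type} (A : set aT) (B : set rT)
    (f : aT -> rT) (g : rT -> aT) :
  {homo f : x / A x >-> B x} -> {homo g : y / B y >-> A y} ->
  (forall x, A x -> g (f x) = x) -> (forall y, B y -> f (g y) = y) ->
  set_bij A B f.
Proof.
move=> fAB gBA fK gK; split => //.
- by move=> x y /set_mem Ax /set_mem Ay fxy; rewrite -(fK x Ax) fxy fK.
- by move=> y By; exists (g y); [exact: gBA | exact: gK].
Qed.

Section PadicAbs.
Variables (R : realType) (p : nat).
Hypothesis p_prime : prime p.

Lemma pRX_gt0 k : (0 : R) < p%:R ^+ k.
Proof. by rewrite exprn_gt0 // ltr0n prime_gt0. Qed.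

Lemma pRX_neq0 k : (p%:R ^+ k : R) != 0.
Proof. by rewrite gt_eqF // pRX_gt0. Qed.

Lemma intr_pX k : ((p ^ k)%N%:Z)%:~R = p%:R ^+ k :> R.
Proof. by rewrite -pmulrn natrX. Qed.

Lemma frac_pX_eq (m m' : int) k k' :
  m%:~R / p%:R ^+ k = m'%:~R / p%:R ^+ k' :> R ->
  m * (p ^ k')%N = m' * (p ^ k)%N.
Proof.
move/eqP; rewrite eqr_div ?pRX_neq0 // -!intr_pX -!rmorphM /= eqr_int.
by move/eqP.
Qed.

Lemma frac_pX_lift (m : int) k j :
  m%:~R / p%:R ^+ k = (m * (p ^ j)%N)%:~R / p%:R ^+ (k + j) :> R.
Proof.
by rewrite rmorphM /= intr_pX exprD invfM mulrACA divff ?mulr1 ?pRX_neq0.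
Qed.

Lemma pabs_frac (m : int) k :
  pabs p (m%:~R / p%:R ^+ k : R) =
  if m == 0 then 0 else p%:R ^+ k / p%:R ^+ logn p `|m|.
Proof.
have [->|m0] := eqVneq m 0.
  apply: xgetPN => _ [m' [k' [m'0 [/frac_pX_eq/esym/eqP E _]]]].
  move: E; rewrite mul0r mulf_eq0 (negPf m'0) /= eqz_nat expn_eq0.
  by rewrite gtn_eqF // prime_gt0.
apply: xget_unique; first by exists m, k.
move=> _ [m' [k' [m'0 [/frac_pX_eq E ->]]]].
have /(congr1 (logn p)) : (`|m| * p ^ k' = `|m'| * p ^ k)%N.
  by move/(congr1 absz): E; rewrite !abszM.
rewrite !lognM ?absz_gt0 ?expn_gt0 ?prime_gt0 // !pfactorK // => L.
apply/eqP; rewrite eqr_div ?pRX_neq0 //; apply/eqP.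
by rewrite -!exprD addnC L addnC.
Qed.

Lemma leq_min_logn_addz (a b : int) : a != 0 -> b != 0 -> a + b != 0 ->
  (minn (logn p (absz a)) (logn p (absz b)) <= logn p (absz (a + b)%R))%N.
Proof.
move=> a0 b0 ab0; set e := minn _ _.
have /dvdzP [qa aE] : ((p ^ e)%N%:Z %| a)%Z.
  by rewrite dvdzE pfactor_dvdn ?absz_gt0 // geq_minl.
have /dvdzP [qb bE] : ((p ^ e)%N%:Z %| b)%Z.
  by rewrite dvdzE pfactor_dvdn ?absz_gt0 // geq_minr.
have : ((p ^ e)%N%:Z %| a + b)%Z by rewrite aE bE -mulrDl dvdz_mull.
by rewrite dvdzE -pfactor_dvdn ?absz_gt0.
Qed.

Lemma pabs_add_frac (a b : int) K :
  pabs p ((a + b)%:~R / p%:R ^+ K : R) <=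
  Num.max (pabs p (a%:~R / p%:R ^+ K)) (pabs p (b%:~R / p%:R ^+ K)).
Proof.
have [->|a0] := eqVneq a 0; first by rewrite add0r le_max lexx orbT.
have [->|b0] := eqVneq b 0; first by rewrite addr0 le_max lexx.
rewrite !pabs_frac (negPf a0) (negPf b0).
have [_|ab0] := eqVneq (a + b) 0.
  by rewrite le_max (ltW (divr_gt0 (pRX_gt0 _) (pRX_gt0 _))).
have le_div j : (j <= logn p (absz (a + b)%R))%N ->
    p%:R ^+ K / p%:R ^+ logn p `|a + b| <= p%:R ^+ K / p%:R ^+ j :> R.
  move=> hj; rewrite ler_pdivrMr ?pRX_gt0 // mulrAC ler_pdivlMr ?pRX_gt0 //.
  by rewrite ler_pM2l ?pRX_gt0 // ler_eXn2l // ltr1n prime_gt1.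
have := leq_min_logn_addz a0 b0 ab0; rewrite /minn.
by case: ifP => _ /le_div h; rewrite le_max h ?orbT.
Qed.

Lemma inHp0 : inHp p (0 : R).
Proof. by exists 0, 0%N; rewrite mul0r. Qed.

Lemma inHp1 : inHp p (1 : R).
Proof. by exists 1, 0%N; rewrite expr0 divr1. Qed.

Lemma inHpN (s : R) : inHp p s -> inHp p (- s).
Proof. by move=> [m [k ->]]; exists (- m), k; rewrite rmorphN mulNr. Qed.

Lemma inHpD (s t : R) : inHp p s -> inHp p t -> inHp p (s + t).
Proof.
move=> [m1 [k1 ->]] [m2 [k2 ->]].
rewrite (frac_pX_lift m1 k1 k2) (frac_pX_lift m2 k2 k1) addnC -mulrDl.
by rewrite -rmorphD; eexists; eexists.
Qed.

Lemma inHpM (s t : R) : inHp p s -> inHp p t -> inHp p (s * t).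
Proof.
move=> [m1 [k1 ->]] [m2 [k2 ->]]; exists (m1 * m2), (k1 + k2).
by rewrite rmorphM /= exprD invfM; ring.
Qed.

Lemma inHp_pX n : inHp p (p%:R ^+ n : R).
Proof. by exists (p ^ n)%N%:Z, 0%N; rewrite expr0 divr1 intr_pX. Qed.

Lemma inHp_pXV n : inHp p ((p%:R ^+ n)^-1 : R).
Proof. by exists 1, n; rewrite mul1r. Qed.

Lemma pabs_add (s t : R) : inHp p s -> inHp p t ->
  pabs p (s + t) <= Num.max (pabs p s) (pabs p t).
Proof.
move=> [m1 [k1 ->]] [m2 [k2 ->]].
rewrite (frac_pX_lift m1 k1 k2) (frac_pX_lift m2 k2 k1) addnC -mulrDl.
by rewrite -rmorphD; exact: pabs_add_frac.
Qed.

Lemma pabsN (s : R) : inHp p s -> pabs p (- s) = pabs p s.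
Proof.
by move=> [m [k ->]]; rewrite -mulNr -rmorphN /= !pabs_frac oppr_eq0 abszN.
Qed.

Lemma pabs_add_sign (s t b : R) : b = 1 \/ b = -1 -> inHp p s -> inHp p t ->
  pabs p (s + b * t) <= Num.max (pabs p s) (pabs p t).
Proof.
move=> [->|->] hs ht; first by rewrite mul1r; exact: pabs_add.
by rewrite mulN1r -(pabsN ht); apply: pabs_add => //; exact: inHpN.
Qed.

Definition scales_pabs (c : R) :=
  forall s, inHp p s -> pabs p (c * s) = pabs p s / c.

Lemma scales_pabs_pX n : scales_pabs (p%:R ^+ n).
Proof.
move=> _ [m [k ->]].
have -> : p%:R ^+ n * (m%:~R / p%:R ^+ k) =
    (m * (p ^ n)%N)%:~R / p%:R ^+ k :> R.
  by rewrite rmorphM /= intr_pX; ring.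
have pn0 : (p ^ n)%N%:Z != 0 by rewrite eqz_nat -lt0n expn_gt0 prime_gt0.
rewrite !pabs_frac mulf_eq0 (negPf pn0) orbF.
have [_|m0] := eqVneq m 0; first by rewrite mul0r.
rewrite abszM lognM ?absz_gt0 ?expn_gt0 ?prime_gt0 //= pfactorK //.
by rewrite exprD invfM mulrA.
Qed.

Lemma scales_pabsV c : c != 0 -> inHp p c^-1 -> scales_pabs c ->
  scales_pabs c^-1.
Proof.
move=> c0 hcV hc s hs; have := hc (c^-1 * s) (inHpM hcV hs).
by rewrite mulVKf // => ->; rewrite invrK divfK.
Qed.

End PadicAbs.

Section Subdivision.
Variable R : realDomainType.

Definition has_subdivision (P : R -> R -> Prop) (a b : R) :=
  exists (k : nat) (t : nat -> R),
    [/\ t 0%N = a, t k = b, (forall i, (i < k)%N -> t i < t i.+1) &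
        forall i, (i < k)%N -> P (t i) (t i.+1)].

Definition subinterval_closed (P : R -> R -> Prop) :=
  forall u v u' v', P u v -> u <= u' -> u' < v' -> v' <= v -> P u' v'.

Lemma has_subdivision_refl P a : has_subdivision P a a.
Proof. by exists 0%N, (fun=> a). Qed.

Lemma has_subdivision_cons P a u b :
  a < u -> P a u -> has_subdivision P u b -> has_subdivision P a b.
Proof.
move=> au Pau [k [t [t0 tk tI tP]]].
exists k.+1, (fun i => if i is i'.+1 then t i' else a); split => //.
- by case=> [|i] /=; rewrite ?t0 // ltnS; apply: tI.
- by case=> [|i] /=; rewrite ?t0 // ltnS; apply: tP.
Qed.

Lemma has_subdivision_ind P (Q : R -> R -> Prop) :
  (forall a, Q a a) ->
  (forall a u b, a < u -> P a u -> has_subdivision P u b -> Q u b -> Q a b) ->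
  forall a b, has_subdivision P a b -> Q a b.
Proof.
move=> Qrefl Qcons a b [k [t [t0 tk tI tP]]].
elim: k a t t0 tk tI tP => [|k IH] a t t0 tk tI tP; first by rewrite -t0 tk.
have tail : has_subdivision P (t 1%N) b.
  by exists k, (fun i => t i.+1); split => // i ik; [apply: tI | apply: tP].
have a1 : a < t 1%N by rewrite -t0; exact: tI.
have Pa1 : P a (t 1%N) by rewrite -t0; exact: tP.
apply: Qcons a1 Pa1 tail _.
by apply: (IH _ (fun i => t i.+1)) => // i ik; [apply: tI | apply: tP].
Qed.

Lemma has_subdivision_le P a b : has_subdivision P a b -> a <= b.
Proof.
by move: a b; apply: has_subdivision_ind => // a u b /ltW au _ _ /(le_trans au).
Qed.

Lemma has_subdivision_first P a b :
  has_subdivision P a b -> a < b -> exists2 u, a < u & P a u.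
Proof.
move: a b; apply: has_subdivision_ind => [a|a u b au Pau _ _ _].
  by rewrite ltxx.
by exists u.
Qed.

Lemma has_subdivision_last P a b :
  has_subdivision P a b -> a < b -> exists2 u, u < b & P u b.
Proof.
move: a b; apply: has_subdivision_ind => [a|a u b au Pau sPub IH _].
  by rewrite ltxx.
have := has_subdivision_le sPub; rewrite le_eqVlt => /orP[/eqP <-|/IH //].
by exists a.
Qed.

Lemma has_subdivision_cat P a u b :
  has_subdivision P a u -> has_subdivision P u b -> has_subdivision P a b.
Proof.
move: a u; apply: has_subdivision_ind => // a v w av Pav _ IH /IH.
exact: has_subdivision_cons.
Qed.

Lemma has_subdivision_mono P Q a b : (forall u v, u < v -> P u v -> Q u v) ->
  has_subdivision P a b -> has_subdivision Q a b.
Proof.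
move=> PQ; move: a b; apply: has_subdivision_ind => [a|a u b au Pau _ IH].
  exact: has_subdivision_refl.
exact: has_subdivision_cons au (PQ _ _ au Pau) IH.
Qed.

Lemma has_subdivision_restrict P a b u v : subinterval_closed P ->
  has_subdivision P a b -> a <= u -> u < v -> v <= b ->
  has_subdivision (fun x y => [/\ P x y, u <= x & y <= v]) u v.
Proof.
move=> hP sP; move: a b sP u; apply: has_subdivision_ind.
  move=> a u au uv va; have := le_lt_trans au (lt_le_trans uv va).
  by rewrite ltxx.
move=> a c b ac Pac _ IH u au uv vb.
have [vc|cv] := leP v c.
  apply: (has_subdivision_cons uv _ (has_subdivision_refl _ _)).
  by split => //; exact: hP Pac au uv vc.
have [cu|uc] := leP c u; first exact: IH.
apply: (has_subdivision_cons uc).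
  by split => //; [exact: hP Pac au uc (lexx c) | exact: ltW].
apply: has_subdivision_mono (IH c (lexx c) cv vb) => x y _ [Pxy cx yv].
by split => //; exact: le_trans (ltW uc) cx.
Qed.

Lemma has_subdivision_meet P Q a b :
  subinterval_closed P -> subinterval_closed Q ->
  has_subdivision P a b -> has_subdivision Q a b ->
  has_subdivision (fun x y => P x y /\ Q x y) a b.
Proof.
move=> hP hQ; move: a b; apply: has_subdivision_ind.
  by move=> a _; exact: has_subdivision_refl.
move=> a c b ac Pac sPcb IH sQab; have cb := has_subdivision_le sPcb.
have sac : has_subdivision (fun x y => P x y /\ Q x y) a c.
  apply: has_subdivision_mono (has_subdivision_restrict hQ sQab (lexx a) ac cb).
  by move=> x y xy [Qxy ax yc]; split => //; exact: hP Pac ax xy yc.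
have [<- //|ncb] := eqVneq c b.
have cb' : c < b by rewrite lt_neqAle ncb cb.
apply: has_subdivision_cat sac (IH _).
apply: has_subdivision_mono (has_subdivision_restrict hQ sQab (ltW ac) cb' (lexx b)).
by move=> x y _ [].
Qed.

End Subdivision.

Section PiecewiseAffine.
Variables (R : realType) (p : nat).
Hypothesis p_prime : prime p.

Definition lincomb (a b : R) (g h : posR R -> R) : posR R -> R :=
  fun x => a * g x + b * h x.

Lemma ext_lincomb a b g h y : ext (lincomb a b g h) y = a * ext g y + b * ext h y.
Proof. by rewrite /ext; case: (insub y) => [u|] /=; rewrite ?mulr0 ?addr0. Qed.

Definition affine_on (g : posR R -> R) (u v : R) :=
  exists s c : R, inHp p s /\ forall y, u <= y <= v -> ext g y = s * y + c.

Lemma affine_on_subinterval g : subinterval_closed (affine_on g).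
Proof.
move=> u v u' v' [s [c [hs gE]]] uu' _ v'v; exists s, c; split => // y.
by case/andP => yu yv; apply: gE; rewrite (le_trans uu' yu) (le_trans yv v'v).
Qed.

Lemma pw_affine_lincomb a b g h : inHp p a -> inHp p b ->
  pw_affine p g -> pw_affine p h -> pw_affine p (lincomb a b g h).
Proof.
move=> ha hb [cg pg] [ch ph]; split.
  move=> x x0; have -> : ext (lincomb a b g h) = fun y => a * ext g y + b * ext h y.
    by apply/funext => y; exact: ext_lincomb.
  by apply: cvgD; apply: cvgM; [exact: cvg_cst | exact: cg | exact: cvg_cst | exact: ch].
move=> u v u0 uv; change (has_subdivision (affine_on (lincomb a b g h)) u v).
have sg : has_subdivision (affine_on g) u v := pg u v u0 uv.
have sh : has_subdivision (affine_on h) u v := ph u v u0 uv.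
have := has_subdivision_meet (affine_on_subinterval (g := g))
  (affine_on_subinterval (g := h)) sg sh.
apply: has_subdivision_mono => x y _ [[s [c [hs gE]]] [s' [c' [hs' hE]]]].
exists (a * s + b * s'), (a * c + b * c'); split.
  by apply: (inHpD p_prime); [exact: inHpM ha hs | exact: inHpM hb hs'].
by move=> z zI; rewrite ext_lincomb gE // hE //; ring.
Qed.

Lemma inK_lincomb a b g h : inHp p a -> inHp p b -> inK p g -> inK p h ->
  inK p (lincomb a b g h).
Proof.
move=> ha hb [pg eg] [ph eh]; split; first exact: pw_affine_lincomb.
by move=> x x0; rewrite !ext_lincomb eg // eh.
Qed.

Definition right_affine_at (g : posR R -> R) (x s : R) :=
  exists d c, 0 < d /\ forall y, x <= y <= x + d -> ext g y = s * y + c.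

Definition left_affine_at (g : posR R -> R) (x s : R) :=
  exists d c, 0 < d /\ forall y, x - d <= y <= x -> ext g y = s * y + c.

Lemma pw_affine_right g x : pw_affine p g -> 0 < x ->
  exists2 s, inHp p s & right_affine_at g x s.
Proof.
case=> _ pw x0; have x1 : x < x + 1 by rewrite ltrDl.
have sg : has_subdivision (affine_on g) x (x + 1) := pw x (x + 1) x0 x1.
have [u xu [s [c [hs gE]]]] := has_subdivision_first sg x1.
exists s => //; exists (u - x), c; split; first by rewrite subr_gt0.
by move=> y /andP[xy yu]; apply: gE; rewrite xy /=; lra.
Qed.

Lemma pw_affine_left g x : pw_affine p g -> 0 < x ->
  exists2 s, inHp p s & left_affine_at g x s.
Proof.
case=> _ pw x0; have x2 : x / 2 < x by lra.
have sg : has_subdivision (affine_on g) (x / 2) x := pw (x / 2) x ltac:(lra) x2.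
have [u ux [s [c [hs gE]]]] := has_subdivision_last sg x2.
exists s => //; exists (x - u), c; split; first by rewrite subr_gt0.
by move=> y /andP[uy yx]; apply: gE; rewrite yx andbT; lra.
Qed.

Lemma right_affine_lincomb a b g h x s s' :
  right_affine_at g x s -> right_affine_at h x s' ->
  right_affine_at (lincomb a b g h) x (a * s + b * s').
Proof.
case=> d [c [d0 gE]] [d' [c' [d'0 hE]]].
exists (Num.min d d'), (a * c + b * c'); split; first by rewrite lt_min d0 d'0.
move=> y /andP[xy yd]; rewrite ext_lincomb gE ?hE; first ring.
- by rewrite xy /=; apply: le_trans yd _; rewrite lerD2l ge_min lexx orbT.
- by rewrite xy /=; apply: le_trans yd _; rewrite lerD2l ge_min lexx.
Qed.

Lemma left_affine_lincomb a b g h x s s' :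
  left_affine_at g x s -> left_affine_at h x s' ->
  left_affine_at (lincomb a b g h) x (a * s + b * s').
Proof.
case=> d [c [d0 gE]] [d' [c' [d'0 hE]]].
exists (Num.min d d'), (a * c + b * c'); split; first by rewrite lt_min d0 d'0.
move=> y /andP[yd yx]; rewrite ext_lincomb gE ?hE; first ring.
- by rewrite yx andbT; apply: le_trans yd; rewrite lerD2l lerN2 ge_min lexx orbT.
- by rewrite yx andbT; apply: le_trans yd; rewrite lerD2l lerN2 ge_min lexx.
Qed.

Lemma lim_right_quotient g x s k (y : R -> R) : right_affine_at g x s -> 0 < k ->
  (forall e, y e = x + k * e) ->
  lim ((fun e => (ext g (y e) - ext g x) / e) @ 0^'+) = k * s.
Proof.
case=> d [c [d0 gE]] k0 yE; apply: lim_near_cst; first exact: Rhausdorff.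
near=> e.
have e0 : 0 < e by near: e; exact: nbhs_right_gt.
have ed : e < d / k by near: e; apply: nbhs_right_lt; exact: divr_gt0.
have ked : e * k < d by rewrite -ltr_pdivlMr.
rewrite yE !gE; first (field; lra).
- by rewrite lexx /=; lra.
- apply/andP; split; nra.
Unshelve. all: by end_near.
Qed.

Lemma lim_left_quotient g x s k (y : R -> R) : left_affine_at g x s -> 0 < k ->
  (forall e, y e = x + k * e) ->
  lim ((fun e => (ext g (y e) - ext g x) / e) @ 0^'-) = k * s.
Proof.
case=> d [c [d0 gE]] k0 yE; apply: lim_near_cst; first exact: Rhausdorff.
near=> e.
have e0 : e < 0 by near: e; exact: nbhs_left_lt.
have ed : - d / k < e.
  by near: e; apply: nbhs_left_gt; rewrite mulNr oppr_lt0 divr_gt0.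
have ked : - d < e * k by rewrite -ltr_pdivrMr.
rewrite yE !gE; first (field; lra).
- by rewrite lexx andbT; lra.
- apply/andP; split; nra.
Unshelve. all: by end_near.
Qed.

Lemma rslope_right_affine g x s : right_affine_at g x s -> rslope g x = s.
Proof.
move=> gs; rewrite /rslope (lim_right_quotient (k := 1) (y := fun t => x + t) gs) //.
  by rewrite mul1r.
by move=> t; rewrite mul1r.
Qed.

Lemma lslope_left_affine g x s : left_affine_at g x s -> lslope g x = s.
Proof.
move=> gs; rewrite /lslope (lim_left_quotient (k := 1) (y := fun t => x + t) gs) //.
  by rewrite mul1r.
by move=> t; rewrite mul1r.
Qed.

Lemma ordf_affine g x sr sl : 0 < x ->
  right_affine_at g x sr -> left_affine_at g x sl -> ordf g x = x * sr - x * sl.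
Proof.
move=> x0 gr gl; have yE e : (1 + e) * x = x + x * e by ring.
by rewrite /ordf (lim_right_quotient gr x0 yE) (lim_left_quotient gl x0 yE).
Qed.

Lemma slopes_lincomb a b g h x : pw_affine p g -> pw_affine p h -> 0 < x ->
  [/\ rslope (lincomb a b g h) x = a * rslope g x + b * rslope h x,
      lslope (lincomb a b g h) x = a * lslope g x + b * lslope h x &
      ordf (lincomb a b g h) x = a * ordf g x + b * ordf h x].
Proof.
move=> pg ph x0.
have [sr _ rg] := pw_affine_right pg x0; have [sl _ lg] := pw_affine_left pg x0.
have [sr' _ rh] := pw_affine_right ph x0; have [sl' _ lh] := pw_affine_left ph x0.
have rc := right_affine_lincomb a b rg rh; have lc := left_affine_lincomb a b lg lh.
rewrite !(rslope_right_affine rc) (rslope_right_affine rg) (rslope_right_affine rh).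
rewrite !(lslope_left_affine lc) (lslope_left_affine lg) (lslope_left_affine lh).
rewrite (ordf_affine x0 rc lc) (ordf_affine x0 rg lg) (ordf_affine x0 rh lh).
by split => //; ring.
Qed.

Lemma slopes_inHp (g : posR R -> R) x : pw_affine p g -> 0 < x ->
  inHp p (rslope g x) /\ inHp p (lslope g x).
Proof.
move=> pg x0; have [sr hr rg] := pw_affine_right pg x0.
have [sl hl lg] := pw_affine_left pg x0.
by rewrite (rslope_right_affine rg) (lslope_left_affine lg).
Qed.

End PiecewiseAffine.

Section H0Transport.
Variables (R : realType) (p : nat).
Hypothesis p_prime : prime p.

Lemma pnorm_le_lincomb_sign (g f : posR R -> R) b rho : b = 1 \/ b = -1 ->
  pw_affine p g -> pw_affine p f -> pnorm_le p g rho -> pnorm_le p f rho ->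
  pnorm_le p (lincomb 1 b g f) rho.
Proof.
move=> hb pg pf Ng Nf lam l0; have [-> -> _] := slopes_lincomb 1 b pg pf l0.
have bound s t : inHp p s -> inHp p t -> pabs p s / lam <= rho ->
    pabs p t / lam <= rho -> pabs p (1 * s + b * t) / lam <= rho.
  move=> hs ht; rewrite mul1r !ler_pdivrMr // => Ns Nt.
  by apply: le_trans (pabs_add_sign p_prime hb hs ht) _; rewrite ge_max Ns Nt.
have [gr gl] := slopes_inHp pg l0; have [fr fl] := slopes_inHp pf l0.
have [Ngr Ngl] := Ng lam l0; have [Nfr Nfl] := Nf lam l0.
by split; apply: bound.
Qed.

Lemma pnorm_le_scale (g : posR R -> R) c rho : 0 < c -> scales_pabs p c ->
  pw_affine p g -> pnorm_le p g rho -> pnorm_le p (lincomb c 0 g g) (rho / c).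
Proof.
move=> c0 hc pg Ng lam l0; have [-> -> _] := slopes_lincomb c 0 pg pg l0.
have bound s : inHp p s -> pabs p s / lam <= rho -> pabs p (c * s) / lam <= rho / c.
  by move=> hs; rewrite hc // mulrAC ler_pM2r // invr_gt0.
have [gr gl] := slopes_inHp pg l0; have [Nr Nl] := Ng lam l0.
by rewrite !mul0r !addr0; split; apply: bound.
Qed.

Lemma H0rho_lincomb_sign (D D' : R -> R) (f g : posR R -> R) b rho :
  b = 1 \/ b = -1 -> inK p f -> pnorm_le p f rho ->
  (forall lam, 0 < lam -> D' lam + b * ordf f lam = D lam) ->
  H0rho p D rho (Some g) -> H0rho p D' rho (Some (lincomb 1 b g f)).
Proof.
move=> hb Kf Nf DD' [[Kg Dg] Ng]; have [[pg _] [pf _]] := (Kg, Kf).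
have hb' : inHp p b by case: hb => ->; [exact: inHp1 | exact: (inHpN (inHp1 R p))].
split; [split|]; first exact: (inK_lincomb p_prime (inHp1 R p) hb' Kg Kf).
- move=> lam l0; have [_ _ ->] := slopes_lincomb 1 b pg pf l0.
  by rewrite mul1r addrCA DD' // addrC; exact: Dg.
- exact: pnorm_le_lincomb_sign.
Qed.

Lemma H0rho_sub_ord D (f g : posR R -> R) rho : inK p f -> pnorm_le p f rho ->
  H0rho p D rho (Some g) ->
  H0rho p (div_add_ord D f) rho (Some (fun x => g x - f x)).
Proof.
move=> Kf Nf Hg; have -> : (fun x => g x - f x) = lincomb 1 (-1) g f.
  by apply/funext => x; rewrite /lincomb mul1r mulN1r.
apply: (H0rho_lincomb_sign (or_intror erefl) Kf Nf _ Hg) => lam _.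
by rewrite /div_add_ord mulN1r addrK.
Qed.

Lemma H0rho_add_ord D (f h : posR R -> R) rho : inK p f -> pnorm_le p f rho ->
  H0rho p (div_add_ord D f) rho (Some h) ->
  H0rho p D rho (Some (fun x => h x + f x)).
Proof.
move=> Kf Nf Hh; have -> : (fun x => h x + f x) = lincomb 1 1 h f.
  by apply/funext => x; rewrite /lincomb !mul1r.
apply: (H0rho_lincomb_sign (or_introl erefl) Kf Nf _ Hh) => lam _.
by rewrite mul1r.
Qed.

Lemma H0rho_scale (D D' : R -> R) (g : posR R -> R) c rho :
  0 < c -> inHp p c -> scales_pabs p c ->
  (forall lam, 0 < lam -> D' lam = c * D lam) ->
  H0rho p D rho (Some g) -> H0rho p D' (rho / c) (Some (fun x => c * g x)).
Proof.
move=> c0 hc sc DD' [[Kg Dg] Ng]; have [pg _] := Kg.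
have -> : (fun x => c * g x) = lincomb c 0 g g.
  by apply/funext => x; rewrite /lincomb mul0r addr0.
split; [split|]; first exact: (inK_lincomb p_prime hc (inHp0 R p) Kg Kg).
- move=> lam l0; have [_ _ ->] := slopes_lincomb c 0 pg pg l0.
  rewrite DD' // mul0r addr0 -mulrDr.
  by apply: mulr_ge0; [exact: ltW | exact: Dg].
- exact: pnorm_le_scale.
Qed.

Lemma H0rho_pX_scale D (g : posR R -> R) n : H0rho p D (p%:R ^+ n) (Some g) ->
  H0rho p (div_scale (p%:R ^+ n) D) 1 (Some (fun x => p%:R ^+ n * g x)).
Proof.
move=> Hg; have := H0rho_scale (D' := div_scale (p%:R ^+ n) D) (pRX_gt0 R p_prime n)
  (inHp_pX R p n) (scales_pabs_pX p_prime n) (fun _ _ => erefl) Hg.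
by rewrite divff ?pRX_neq0.
Qed.

Lemma H0rho_pX_unscale D (h : posR R -> R) n :
  H0rho p (div_scale (p%:R ^+ n) D) 1 (Some h) ->
  H0rho p D (p%:R ^+ n) (Some (fun x => (p%:R ^+ n)^-1 * h x)).
Proof.
move=> Hh; have pn0 := pRX_neq0 R p_prime n; have hcV := inHp_pXV R p n.
have cV0 : 0 < (p%:R ^+ n)^-1 :> R by rewrite invr_gt0 pRX_gt0.
have DD' lam : 0 < lam -> D lam = (p%:R ^+ n)^-1 * div_scale (p%:R ^+ n) D lam.
  by rewrite /div_scale mulKf.
have := H0rho_scale cV0 hcV (scales_pabsV pn0 hcV (scales_pabs_pX p_prime n)) DD' Hh.
by rewrite div1r invrK.
Qed.

End H0Transport.

Section CoveringDimension.
Variables (R : realType) (p : nat).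

Definition continuous_close (A : set (Kelt R)) (F : Kelt R -> Kelt R) :=
  forall x, A x -> forall e : R, 0 < e -> exists2 d : R, 0 < d &
    forall y, A y -> Defs.close p x y d -> Defs.close p (F x) (F y) e.

Lemma openIn_preimage (A B : set (Kelt R)) (F : Kelt R -> Kelt R) U :
  {homo F : x / A x >-> B x} -> continuous_close A F ->
  openIn p B U -> openIn p A [set x | A x /\ U (F x)].
Proof.
move=> AB cF [_ oU]; split => [x [] //|x [Ax Ux]].
have [e e0 He] := oU _ Ux; have [d d0 Hd] := cF x Ax e e0.
by exists d => // y Ay cxy; split => //; apply: He; [exact: AB | exact: Hd].
Qed.

Lemma covdim_le_transport (A B : set (Kelt R)) (F G : Kelt R -> Kelt R) n :
  {homo F : x / A x >-> B x} -> {homo G : y / B y >-> A y} ->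
  (forall y, B y -> F (G y) = y) -> continuous_close A F -> continuous_close B G ->
  covdim_le p A n -> covdim_le p B n.
Proof.
move=> AB BA FG cF cG dimA m U oU covU.
have oU' i : (i < m)%N -> openIn p A [set x | A x /\ U i (F x)].
  by move=> im; exact: openIn_preimage AB cF (oU i im).
have covU' x : A x -> exists2 i, (i < m)%N & A x /\ U i (F x).
  by move=> Ax; have [i im Ui] := covU _ (AB _ Ax); exists i.
have [k [V [oV covV refV ordV]]] := dimA m _ oU' covU'.
exists k, (fun j => [set y | B y /\ V j (G y)]); split.
- by move=> j jk; exact: openIn_preimage BA cG (oV j jk).
- by move=> y By; have [j jk Vj] := covV _ (BA _ By); exists j.
- move=> j jk; have [i im sub] := refV j jk; exists i => // y [By Vy].
  by have [_] := sub _ Vy; rewrite FG.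
- move=> y By J uJ HJ; apply: (ordV (G y) (BA _ By) J uJ) => j jJ.
  by have [jk [_ Vy]] := HJ j jJ.
Qed.

Lemma top_dim_homeo (A B : set (Kelt R)) (F G : Kelt R -> Kelt R) :
  {homo F : x / A x >-> B x} -> {homo G : y / B y >-> A y} ->
  (forall y, B y -> F (G y) = y) -> (forall x, A x -> G (F x) = x) ->
  continuous_close A F -> continuous_close B G -> top_dim p A = top_dim p B.
Proof.
move=> AB BA FG GF cF cG; rewrite /top_dim.
suff -> : [set n | covdim_le p A n] = [set n | covdim_le p B n] by [].
apply/seteqP; split => n /=.
- exact: covdim_le_transport AB BA FG cF cG.
- exact: covdim_le_transport BA AB GF cG cF.
Qed.

Lemma dist_dilation_le (f g f' g' : posR R -> R) (c : R) : (0 < p)%N -> 0 < c ->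
  (forall y, `|ext f' y - ext g' y| = c * `|ext f y - ext g y|) ->
  dist p f' g' <= c * dist p f g.
Proof.
move=> p0 c0 E; rewrite /dist.
(* [sup] of a set that is not bounded above is 0, whence the case split. *)
set S := [set `|ext f x - ext g x| | x in `[1, p%:R]%classic].
set S' := [set `|ext f' x - ext g' x| | x in `[1, p%:R]%classic].
have S'0 : S' !=set0.
  by exists `|ext f' 1 - ext g' 1|, 1 => //=; rewrite in_itv /= lexx ler1n.
have [ubS|nubS] := pselect (has_ubound S).
  apply: ge_sup => // r [x xI <-]; rewrite E ler_pM2l //.
  by apply: ub_le_sup => //; exists x.
rewrite sup_out; last first.
  move=> [_ [M hM]]; apply: nubS; exists (M / c) => r [x xI <-].
  by rewrite ler_pdivlMr // mulrC -E; apply: hM; exists x.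
by rewrite sup_out ?mulr0 // => -[].
Qed.

Lemma ext_scale (c : R) (g : posR R -> R) y : ext (fun x => c * g x) y = c * ext g y.
Proof. by rewrite /ext; case: (insub y) => [u|] /=; rewrite ?mulr0. Qed.

Lemma continuous_close_scale (A : set (Kelt R)) (c : R) : (0 < p)%N -> 0 < c ->
  continuous_close A (omap (fun g x => c * g x)).
Proof.
move=> p0 c0 [f|] _ e e0; exists (e / c); rewrite ?divr_gt0 // => -[g|] //= _ fg.
have E y : `|ext (fun x => c * f x) y - ext (fun x => c * g x) y| =
    c * `|ext f y - ext g y|.
  by rewrite !ext_scale -mulrBr normrM gtr0_norm.
apply: le_lt_trans (dist_dilation_le p0 c0 E) _.
by rewrite -ltr_pdivlMl // mulrC.
Qed.

End CoveringDimension.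

Theorem lemma5p18 (R : realType) (p : nat) (D : R -> R) (f : posR R -> R) :
  prime p -> is_divisor p D -> inK p f ->
  (* (i) *)
  (forall n : nat, pnorm_le p f (p%:R ^+ n) ->
     let A := H0rho p D (p%:R ^+ n) in
     let B := H0rho p (div_add_ord D f) (p%:R ^+ n) in
     let phi := fun xi : Kelt R => omap (fun g => (fun x => g x - f x)) xi in
     [/\ set_bij A B phi,
         (forall xi eta, A xi -> A eta -> phi (kjoin xi eta) = kjoin (phi xi) (phi eta)) &
         (forall (a : Rmax R) xi, A xi -> phi (kact a xi) = kact a (phi xi))]) /\
  (* (ii) *)
  (forall n : nat,
     let A := H0rho p D (p%:R ^+ n) in
     let B := H0rho p (div_scale (p%:R ^+ n) D) 1 in
     let F := fun xi : Kelt R => omap (fun g => (fun x => p%:R ^+ n * g x)) xi in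
     [/\ set_bij A B F,
         (forall xi eta, A xi -> A eta -> F (kjoin xi eta) = kjoin (F xi) (F eta)),
         (forall (a : Rmax R) xi, A xi ->
            F (kact a xi) = kact (omap (fun a => p%:R ^+ n * a) a) (F xi)) &
         top_dim p A = top_dim p B]).
Proof.
(* No property of D is needed: both maps transport H^0 for any function D. *)
move=> hp _ hf; split => n.
- move=> hfn A B phi; split.
  + apply: (set_bij_inverse (g := omap (fun h x => h x + f x))).
    * by move=> [g|] // Ag; exact: H0rho_sub_ord.
    * by move=> [h|] // Bh; exact: H0rho_add_ord.
    * by move=> [g|] _ //=; congr Some; apply/funext => x; rewrite subrK.
    * by move=> [h|] _ //=; congr Some; apply/funext => x; rewrite addrK.
  + by move=> [g|] [h|] _ _ //=; congr Some; apply/funext => x; rewrite addr_maxl.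
  + by move=> [a|] [g|] _ //=; congr Some; apply/funext => x; rewrite addrAC.
- move=> A B F; have pn0 := pRX_neq0 R hp n.
  pose G : Kelt R -> Kelt R := omap (fun h x => (p%:R ^+ n)^-1 * h x).
  have AB : {homo F : xi / A xi >-> B xi}.
    by move=> [g|] //; exact: H0rho_pX_scale.
  have BA : {homo G : xi / B xi >-> A xi}.
    by move=> [h|] //; exact: H0rho_pX_unscale.
  have GF xi : A xi -> G (F xi) = xi.
    by case: xi => [g|] _ //=; congr Some; apply/funext => x; rewrite mulKf.
  have FG xi : B xi -> F (G xi) = xi.
    by case: xi => [h|] _ //=; congr Some; apply/funext => x; rewrite mulVKf.
  split; first exact: set_bij_inverse AB BA GF FG.
  + move=> [g|] [h|] _ _ //=; congr Some; apply/funext => x.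
    by rewrite maxr_pMr // ltW // pRX_gt0.
  + by move=> [a|] [g|] _ //=; congr Some; apply/funext => x; rewrite mulrDr.
  + apply: (top_dim_homeo (p := p) AB BA FG GF); apply: continuous_close_scale;
      by rewrite ?prime_gt0 ?invr_gt0 ?pRX_gt0.
Qed.
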